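(* Assume $\omega$ satisfies $\omega(x)/\mathrm{tr}\,\omega(x)\ge2\kappa I$ for all $x\in\mathbb Z^d$, with $\kappa\in(0,\frac1{2d}]$. Let $\theta=\frac1{4\kappa}$ (so $\theta\ge d/2$) and $\eta(y)=(1+|y|^2)^{-\theta}$ for $y\in\mathbb R^d$. There exists a constant $C_0=C_0(d,\kappa)>0$ such that for all $x\in\mathbb Z^d$, $$L_\omega\eta(x)\ge-\mathbb 1_{x\in B_{C_0\theta^2}}.$$
   Context: $\omega:\mathbb Z^d\to\{$positive-definite diagonal matrices$\}$, $\omega(x)=\mathrm{diag}[\omega_1(x),\dots,\omega_d(x)]$. $L_\omega u(x)=\sum_{i=1}^d\frac{\omega_i(x)}{2\mathrm{tr}\,\omega(x)}[u(x+e_i)+u(x-e_i)-2u(x)]$. $B_r=\{x\in\mathbb Z^d:|x|<r\}$. *)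

From mathcomp Require Import all_boot all_order all_algebra.
From mathcomp Require Import all_classical all_reals all_analysis.
Set Implicit Arguments. Unset Strict Implicit. Unset Printing Implicit Defensive.
Import Order.TTheory GRing.Theory Num.Theory.
Local Open Scope ring_scope.

Definition lat_norm (R : realType) (d : nat) (x : 'I_d -> int) : R :=
  Num.sqrt (\sum_(i < d) ((x i)%:~R : R) ^+ 2).

Definition lat_to_real (R : realType) (d : nat) (x : 'I_d -> int) : 'I_d -> R :=
  fun j => (x j)%:~R.

Definition lat_shift (d : nat) (x : 'I_d -> int) (i : 'I_d) (s : int) : 'I_d -> int :=
  fun j => x j + s * (i == j)%:R.

Definition eta_fun (R : realType) (d : nat) (theta : R) (y : 'I_d -> R) : R :=
  (1 + \sum_(i < d) y i ^+ 2) `^ (- theta).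

(* L_omega u(x) = sum_i omega_i(x)/(2 tr omega(x)) [u(x+e_i)+u(x-e_i)-2u(x)],
   where omega : Z^d -> (diagonal entries) 'I_d -> R. *)
Definition L_omega (R : realType) (d : nat) (omega : ('I_d -> int) -> 'I_d -> R)
  (u : ('I_d -> R) -> R) (x : 'I_d -> int) : R :=
  \sum_(i < d) omega x i / (2 * \sum_(j < d) omega x j) *
    (u (lat_to_real R (lat_shift x i 1)) + u (lat_to_real R (lat_shift x i (-1)))
     - 2 * u (lat_to_real R x)).

(* Put s = 1 + |x|^2, so that eta (x +- e_i) = (s + 1 +- 2 x_i)^(-T) with T = theta.
   Writing u^(-T) + v^(-T) = (uv)^(-T/2) (e^z + e^-z) with z = (T/2) ln (u/v), the bounds
   cosh z >= 1 + z^2/2, |ln (u/v)| >= |u - v| / max(u, v) and Bernoulli's inequality for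
   (uv/s^2)^(-T/2) give each second difference at least
   s^(-T) (- T (2s + 1)/s^2 + c x_i^2) with c ~ 4 T (T + 1)/s^2.
   The weights omega_i / (2 tr omega) sum to 1/2 and are at least kappa = 1/(4T), so the
   weighted sum of the x_i^2 is at least |x|^2/(4T), and the quadratic term beats the
   constant one, to leading order -T/s + (T + 1)/s = 1/s, as soon as |x| >= 100 T.
   Near the origin every second difference is at least -2 eta(x) >= -2, so L eta >= -1. *)

From mathcomp Require Import all_boot all_order all_algebra.
From mathcomp Require Import all_classical all_reals all_analysis.
From mathcomp Require Import ring lra.
Import Order.TTheory GRing.Theory Num.Theory.
Import numFieldNormedType.Exports.
Local Open Scope ring_scope.

Section RealInequalities.
Variable R : realType.
Implicit Types (x y z u v m p T s : R).

Lemma exprD_exprN_ge0 z k : 0 <= z ^+ k + (- z) ^+ k.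
Proof.
wlog z_ge0 : z / 0 <= z.
  move=> hz; case: (lerP 0 z) => [/hz //| /ltW z_le0].
  by rewrite addrC -{2}[z]opprK; apply: hz; rewrite oppr_ge0.
rewrite -[(- z) ^+ k]opprK subr_ge0.
by rewrite (le_trans (ler_norm _)) // normrN normrX normrN ger0_norm.
Qed.

Lemma expR_addN_ge z : 2 + z ^+ 2 <= expR z + expR (- z).
Proof.
pose c : R ^nat := exp_coeff z + exp_coeff (- z).
have cvg_c : cvgn (series c).
  by rewrite /c seriesD; apply: is_cvgD; exact: is_cvg_series_exp_coeff.
have -> : expR z + expR (- z) = limn (series c).
  by rewrite /c seriesD limD //; exact: is_cvg_series_exp_coeff.
have -> : 2 + z ^+ 2 = series c 3.
  rewrite /series /c /exp_coeff /= !big_nat_recr //= big_geq //=.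
  by rewrite !fctE /= !factS fact0 sqrrN; field.
apply: (nondecreasing_cvgn_le _ cvg_c).
apply/nondecreasing_seqP => n; rewrite /series /= big_nat_recr //= lerDl.
by rewrite /c /exp_coeff /= -mulrDl divr_ge0 // exprD_exprN_ge0.
Qed.

Lemma ln_le_subr1 x : 0 < x -> ln x <= x - 1.
Proof. by move=> x_gt0; rewrite -[x in ln x](subrKC 1) le_ln1Dx //; lra. Qed.

Lemma expR_Nmul_ln_ge p y : 0 <= p -> 0 < y -> 1 - p * (y - 1) <= expR (- p * ln y).
Proof.
move=> p_ge0 y_gt0; apply: le_trans (expR_ge1Dx _).
by rewrite mulNr lerD2l lerN2 ler_wpM2l // ln_le_subr1.
Qed.

Lemma sqr_ln_sub_ge u v m : 0 < u -> 0 < v -> u <= m -> v <= m ->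
  ((u - v) / m) ^+ 2 <= (ln u - ln v) ^+ 2.
Proof.
wlog vu : u v / v <= u.
  move=> huv u_gt0 v_gt0 um vm; case: (lerP v u) => [vu|/ltW uv]; first exact: huv.
  by rewrite -sqrrN -mulNr opprB -[in leRHS]sqrrN opprB; apply: huv.
move=> u_gt0 v_gt0 um _.
have m_gt0 : 0 < m by apply: lt_le_trans um.
have uv_ge0 : 0 <= u - v by rewrite subr_ge0.
have ln_sub_ge : (u - v) / u <= ln u - ln v.
  have := @ln_le_subr1 _ (divr_gt0 v_gt0 u_gt0).
  rewrite ln_div ?posrE // mulrBl divff ?gt_eqF //; lra.
have ln_ge0 : 0 <= ln u - ln v by apply: le_trans ln_sub_ge; rewrite divr_ge0 // ltW.
rewrite ler_sqr ?nnegrE ?divr_ge0 ?(ltW m_gt0) //.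
by apply: le_trans ln_sub_ge; rewrite ler_pdivrMr // mulrAC ler_pdivlMr // ler_wpM2l.
Qed.

Lemma powRN_add_ge T u v s : 0 <= T -> 0 < u -> 0 < v -> 0 < s ->
  s `^ (- T) * (1 - T / 2 * (u * v / s ^+ 2 - 1)) * (2 + (T / 2 * (ln u - ln v)) ^+ 2)
  <= u `^ (- T) + v `^ (- T).
Proof.
move=> T_ge0 u_gt0 v_gt0 s_gt0; rewrite /powR !gt_eqF //.
(* [u^-T + v^-T = e^M (e^-z + e^z)] with [e^M = (uv)^(-T/2)] *)
set z := T / 2 * (ln u - ln v); set M := - T * ln s - T / 2 * ln (u * v / s ^+ 2).
have M_mean : M = - T / 2 * (ln u + ln v).
  rewrite /M ln_div ?posrE ?mulr_gt0 ?exprn_gt0 // lnM ?posrE // lnXn //.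
  by rewrite -mulr_natr; field.
have -> : - T * ln u = M + - z by rewrite M_mean /z; field.
have -> : - T * ln v = M + z by rewrite M_mean /z; field.
have e_M : expR (- T * ln s) * (1 - T / 2 * (u * v / s ^+ 2 - 1)) <= expR M.
  rewrite /M expRD ler_wpM2l ?expR_ge0 // -[in leRHS]mulNr.
  by apply: expR_Nmul_ln_ge; [exact: divr_ge0 | rewrite divr_gt0 ?mulr_gt0 ?exprn_gt0].
rewrite !(expRD M) -mulrDr.
apply: le_trans (ler_wpM2r _ e_M) _; first by rewrite addr_ge0 // sqr_ge0.
by rewrite ler_wpM2l ?expR_ge0 // (addrC (expR (- z))) expR_addN_ge.
Qed.
End RealInequalities.

Lemma cubic_excess_le {R : realFieldType} (r : R) : 20 <= r ->
  (2 * (1 + r ^+ 2) + 1) * (1 + r ^+ 2 + 1 + 2 * r) ^+ 2 - 2 * r ^+ 2 * (1 + r ^+ 2) ^+ 2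
  <= 9 * r * (1 + r ^+ 2) ^+ 2.
Proof.
move=> r_ge20; set s := 1 + r ^+ 2.
have -> : (2 * s + 1) * (s + 1 + 2 * r) ^+ 2 - 2 * r ^+ 2 * s ^+ 2 =
    (7 + 8 * r) * s ^+ 2 + 2 * s * (1 + 2 * r) ^+ 2 + 2 * s * (1 + 2 * r) + (1 + 2 * r) ^+ 2.
  by rewrite /s; ring.
have : (1 + 2 * r) ^+ 2 <= 5 * s by rewrite /s; nra.
have : 1 + 2 * r <= s by rewrite /s; nra.
have : 5 <= s by rewrite /s; nra.
nra.
Qed.

Section SecondDifference.
Variables (R : realType) (T s r : R).
(* [E_min] bounds below, uniformly in [a], the Bernoulli factor
   [1 - T/2 (u v/s^2 - 1)] of [powRN_add_ge] at [u, v = s + 1 +- 2 a]. *)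
Let E_min := 1 - T * (2 * s + 1) / (2 * s ^+ 2).
Let quad_coeff := 4 * T / s ^+ 2 + 4 * T ^+ 2 * E_min / (s + 1 + 2 * r) ^+ 2.

Lemma second_diff_powRN_ge a : 0 <= T -> 1 + a ^+ 2 <= s -> `|a| <= r -> 0 <= E_min ->
  s `^ (- T) * (- T * (2 * s + 1) / s ^+ 2 + quad_coeff * a ^+ 2)
  <= (s + 1 + 2 * a) `^ (- T) + (s + 1 - 2 * a) `^ (- T) - 2 * s `^ (- T).
Proof.
move=> T_ge0 s_ge a_le E_min_ge0.
have s_gt0 : 0 < s by nra.
have a_le_r : - r <= a <= r by rewrite -ler_norml.
set u := s + 1 + 2 * a; set v := s + 1 - 2 * a; set D := s + 1 + 2 * r.
have u_gt0 : 0 < u by rewrite /u; nra.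
have v_gt0 : 0 < v by rewrite /v; nra.
have D_gt0 : 0 < D by rewrite /D; lra.
set E := 1 - T / 2 * (u * v / s ^+ 2 - 1).
set B := 4 * T ^+ 2 * a ^+ 2 / D ^+ 2.
set Z := (T / 2 * (ln u - ln v)) ^+ 2.
have E_ge_min : E_min <= E.
  have -> : E = E_min + 2 * T * a ^+ 2 / s ^+ 2 by rewrite /E /E_min /u /v; field; lra.
  by rewrite lerDl divr_ge0 ?sqr_ge0 // mulr_ge0 ?sqr_ge0 // mulr_ge0.
have B_le : B <= Z.
  have -> : B = (T / 2) ^+ 2 * ((u - v) / D) ^+ 2 by rewrite /B /u /v; field; lra.
  rewrite /Z [in leRHS]exprMn ler_wpM2l ?sqr_ge0 // sqr_ln_sub_ge // /u /v /D; lra.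
have B_ge0 : 0 <= B by rewrite /B divr_ge0 ?sqr_ge0 // mulr_ge0 ?sqr_ge0 // mulr_ge0 ?sqr_ge0.
have EZ : E_min * B <= E * Z by apply: ler_pM.
have := @powRN_add_ge _ T u v s T_ge0 u_gt0 v_gt0 s_gt0; rewrite -/E -/Z.
have -> : - T * (2 * s + 1) / s ^+ 2 + quad_coeff * a ^+ 2 = 2 * E - 2 + E_min * B.
  by rewrite /quad_coeff /B /E /E_min /u /v /D; field; lra.
have := powR_ge0 s (- T); nra.
Qed.

Lemma E_min_ge0 : 0 <= T -> 100 * T <= r -> s = 1 + r ^+ 2 -> 0 <= E_min.
Proof.
move=> T_ge0 r_ge s_def.
have s_ge1 : 1 <= s by rewrite s_def; nra.
have r_le_s : r <= s by rewrite s_def; nra.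
have : 100 * T * (2 * s + 1) <= r * (2 * s + 1) by rewrite ler_wpM2r //; lra.
have : r * (2 * s + 1) <= s * (3 * s) by rewrite ler_pM //; lra.
by rewrite /E_min subr_ge0 ler_pdivrMr ?mul1r //; nra.
Qed.

Lemma quad_coeff_dominates : 2^-1 <= T -> 100 * T <= r -> s = 1 + r ^+ 2 ->
  T * (2 * s + 1) / (2 * s ^+ 2) <= quad_coeff * (r ^+ 2 / (4 * T)).
Proof.
move=> T_ge_half r_ge s_def.
set D := s + 1 + 2 * r.
have r_ge20 : 20 <= r by lra.
have s_gt0 : 0 < s by rewrite s_def; nra.
have D_gt0 : 0 < D by rewrite /D; lra.
have := cubic_excess_le _ r_ge20; rewrite -s_def -/D => excess.
have r2s : r ^+ 2 * (2 * s + 1) <= 3 * s ^+ 2 by rewrite s_def; nra.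
have Ds : s <= D by rewrite /D; lra.
have G_ge0 : 0 <= 2 * r ^+ 2 * D ^+ 2 + T * r ^+ 2 * (2 * s ^+ 2 - T * (2 * s + 1))
                  - T * (2 * s + 1) * D ^+ 2.
  have T_ge0 : 0 <= T by lra.
  have : r ^+ 2 * s ^+ 2 <= r ^+ 2 * D ^+ 2.
    by rewrite ler_wpM2l ?sqr_ge0 // ler_sqr ?nnegrE; lra.
  have : T * ((2 * s + 1) * D ^+ 2 - 2 * r ^+ 2 * s ^+ 2) <= T * (9 * r * s ^+ 2).
    exact: ler_wpM2l.
  have : T ^+ 2 * (r ^+ 2 * (2 * s + 1)) <= T ^+ 2 * (3 * s ^+ 2).
    by rewrite ler_wpM2l ?sqr_ge0.
  have : 0 <= s ^+ 2 * (2 * r ^+ 2 - 9 * T * r - 3 * T ^+ 2).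
    by rewrite mulr_ge0 ?sqr_ge0 //; nra.
  lra.
rewrite -subr_ge0.
have -> : quad_coeff * (r ^+ 2 / (4 * T)) - T * (2 * s + 1) / (2 * s ^+ 2) =
  (2 * r ^+ 2 * D ^+ 2 + T * r ^+ 2 * (2 * s ^+ 2 - T * (2 * s + 1)) - T * (2 * s + 1) * D ^+ 2)
    / (2 * s ^+ 2 * D ^+ 2).
  by rewrite /quad_coeff /E_min -/D; field; lra.
by rewrite divr_ge0 // mulr_ge0 ?sqr_ge0 // mulr_ge0 ?sqr_ge0.
Qed.

Lemma weighted_second_diff_ge0 (I : finType) (w a : I -> R) :
  2^-1 <= T -> 100 * T <= r -> s = 1 + r ^+ 2 -> \sum_i a i ^+ 2 = r ^+ 2 ->
  (forall i, (4 * T)^-1 <= w i) -> \sum_i w i = 2^-1 ->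
  0 <= \sum_i w i * ((s + 1 + 2 * a i) `^ (- T) + (s + 1 - 2 * a i) `^ (- T) - 2 * s `^ (- T)).
Proof.
move=> T_ge_half r_ge s_def sum_a2 w_ge sum_w.
have T_gt0 : 0 < T by lra.
have r_ge0 : 0 <= r by lra.
have E_min_nneg : 0 <= E_min by apply: E_min_ge0; lra.
have quad_coeff_ge0 : 0 <= quad_coeff.
  by rewrite /quad_coeff addr_ge0 ?divr_ge0 ?sqr_ge0 ?mulr_ge0 ?sqr_ge0 //; lra.
have a2_le i : a i ^+ 2 <= r ^+ 2.
  by rewrite -sum_a2 (bigD1 i) //= lerDl sumr_ge0 // => j _; rewrite sqr_ge0.
have per_dir i : w i * (s `^ (- T) * (- T * (2 * s + 1) / s ^+ 2 + quad_coeff * a i ^+ 2)) <=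
    w i * ((s + 1 + 2 * a i) `^ (- T) + (s + 1 - 2 * a i) `^ (- T) - 2 * s `^ (- T)).
  apply: ler_wpM2l; first by apply: le_trans _ (w_ge i); rewrite invr_ge0; lra.
  apply: second_diff_powRN_ge => //; first lra; first by have := a2_le i; rewrite s_def; lra.
  by rewrite -ler_sqr ?nnegrE // real_normK ?num_real.
apply: le_trans (ler_sum _ (fun i _ => per_dir i)).
have -> : \sum_i w i * (s `^ (- T) * (- T * (2 * s + 1) / s ^+ 2 + quad_coeff * a i ^+ 2)) =
    s `^ (- T) * (- T * (2 * s + 1) / s ^+ 2 * \sum_i w i + quad_coeff * \sum_i w i * a i ^+ 2).
  by rewrite !mulr_sumr -big_split mulr_sumr; apply: eq_bigr => i _ /=; ring.
rewrite mulr_ge0 ?powR_ge0 // sum_w.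
have : (4 * T)^-1 * r ^+ 2 <= \sum_i w i * a i ^+ 2.
  by rewrite -sum_a2 mulr_sumr; apply: ler_sum => i _; rewrite ler_wpM2r ?sqr_ge0.
have := quad_coeff_dominates T_ge_half r_ge s_def.
set W := \sum_i w i * a i ^+ 2 => balance W_ge.
have : quad_coeff * (r ^+ 2 / (4 * T)) <= quad_coeff * W by apply: ler_wpM2l; rewrite // mulrC.
have -> : - T * (2 * s + 1) / s ^+ 2 * 2^-1 = - (T * (2 * s + 1) / (2 * s ^+ 2)).
  by field; rewrite s_def gt_eqF // ltr_pwDl // sqr_ge0.
lra.
Qed.
End SecondDifference.

Section LatticeGenerator.
Variables (R : realType) (d : nat) (omega : ('I_d -> int) -> 'I_d -> R) (x : 'I_d -> int).

Let q i : R := (x i)%:~R.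
Let s := 1 + \sum_(i < d) q i ^+ 2.
Let w i := omega x i / (2 * \sum_(j < d) omega x j).

Lemma eta_lat_shift T i c :
  eta_fun T (lat_to_real R (lat_shift x i c)) = (s + 2 * c%:~R * q i + c%:~R ^+ 2) `^ (- T).
Proof.
rewrite /eta_fun /s (bigD1 i) //= [in RHS](bigD1 i) //=.
rewrite (eq_bigr (fun j => q j ^+ 2)) => [|j ji]; last first.
  by rewrite /lat_to_real /lat_shift eq_sym (negbTE ji) mulr0 addr0.
by rewrite /lat_to_real /lat_shift eqxx mulr1 intrD /q; congr (_ `^ _); ring.
Qed.

Lemma L_omega_etaE T : L_omega omega (eta_fun T) x =
  \sum_(i < d) w i * ((s + 1 + 2 * q i) `^ (- T) + (s + 1 - 2 * q i) `^ (- T) - 2 * s `^ (- T)).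
Proof.
apply: eq_bigr => i _; rewrite !eta_lat_shift.
by congr (_ * (_ `^ _ + _ `^ _ - 2 * _)); rewrite ?mulrN1z; ring.
Qed.

Hypotheses (d_gt0 : (0 < d)%N) (omega_gt0 : forall i, 0 < omega x i).

Lemma trace_gt0 : 0 < \sum_(j < d) omega x j.
Proof.
rewrite (bigD1 (Ordinal d_gt0)) //=; apply: lt_le_trans (omega_gt0 (Ordinal d_gt0)) _.
by rewrite lerDl sumr_ge0 // => j _; rewrite ltW.
Qed.

Lemma weight_ge0 i : 0 <= w i.
Proof. by rewrite divr_ge0 ?mulr_ge0 ?ltW ?omega_gt0 ?trace_gt0. Qed.

Lemma sum_weight : \sum_(i < d) w i = 2^-1.
Proof. by rewrite -mulr_suml invfM mulrCA divff ?mulr1 // gt_eqF ?trace_gt0. Qed.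

Lemma L_omega_eta_geN1 T : 0 <= T -> -1 <= L_omega omega (eta_fun T) x.
Proof.
move=> T_ge0; rewrite L_omega_etaE.
have s_ge1 : 1 <= s by rewrite lerDl sumr_ge0 // => i _; rewrite sqr_ge0.
have P_le1 : s `^ (- T) <= 1 by rewrite -(powRr0 s) ler_powR // oppr_le0.
have diff_ge i : -2 <= (s + 1 + 2 * q i) `^ (- T) + (s + 1 - 2 * q i) `^ (- T) - 2 * s `^ (- T).
  by have := powR_ge0 (s + 1 + 2 * q i) (- T); have := powR_ge0 (s + 1 - 2 * q i) (- T); lra.
apply: le_trans (ler_sum _ (fun i _ => ler_wpM2l (weight_ge0 i) (diff_ge i))).
by rewrite -mulr_suml sum_weight; lra.
Qed.

Lemma L_omega_eta_ge0 T : 2^-1 <= T -> 100 * T <= lat_norm R x ->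
  (forall i, (2 * T)^-1 <= omega x i / \sum_(j < d) omega x j) ->
  0 <= L_omega omega (eta_fun T) x.
Proof.
move=> T_ge_half far omega_ge; rewrite L_omega_etaE.
have sum_q2_ge0 : 0 <= \sum_(i < d) q i ^+ 2 by rewrite sumr_ge0 // => i _; rewrite sqr_ge0.
apply: (@weighted_second_diff_ge0 _ T s (lat_norm R x)) => //.
1,2: by rewrite /lat_norm sqr_sqrtr.
- move=> i; have := omega_ge i.
  have -> : w i = omega x i / (\sum_(j < d) omega x j) / 2.
    by rewrite /w invfM mulrA mulrAC.
  have -> : (4 * T)^-1 = (2 * T)^-1 / 2 by field; lra.
  lra.
- exact: sum_weight.
Qed.
End LatticeGenerator.

Theorem lemma2p5 (R : realType) (d : nat) (kappa : R) :
  (0 < d)%N -> 0 < kappa -> kappa <= (2 * d%:R)^-1 ->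
  exists C0 : R, 0 < C0 /\
    forall omega : ('I_d -> int) -> 'I_d -> R,
      (forall x i, 0 < omega x i) ->
      (forall x i, omega x i / (\sum_(j < d) omega x j) >= 2 * kappa) ->
      forall x : 'I_d -> int,
        L_omega omega (eta_fun ((4 * kappa)^-1)) x >=
          - (if lat_norm R x < C0 * ((4 * kappa)^-1) ^+ 2 then 1 else 0).
Proof.
move=> d_gt0 kappa_gt0 kappa_le; set T := (4 * kappa)^-1.
have T_ge_half : 2^-1 <= T.
  have d_ge1 : 1 <= d%:R :> R by rewrite ler1n.
  have : kappa <= 2^-1 by apply: le_trans kappa_le _; rewrite lef_pV2 ?posrE; lra.
  by rewrite /T lef_pV2 ?posrE; lra.
exists 200; split=> // omega omega_gt0 omega_ge x.
case: ifPn => [_ | far].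
  by apply: L_omega_eta_geN1 => //; lra.
rewrite oppr0; apply: L_omega_eta_ge0 => //.
- by move: far; rewrite -leNgt; nra.
- have -> : (2 * T)^-1 = 2 * kappa by rewrite /T; field; lra.
  exact: omega_ge.
Qed.
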